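(* Let $K\ge2$, $E=[-1,1]^K$, $\theta$ the uniform probability measure on $[-1,1]$, and $\Phi:E\to[0,\Phi^*]$ measurable. Let $\pi$ be the probability density on $E$ with respect to $\bigotimes_{i=1}^K\theta(du_i)$ given by $\pi(u)=\exp\{-\Phi(u)\}/\int_E\exp\{-\Phi(v)\}\bigotimes_i\theta(dv_i)$. Let $k\in\mathbb{N}$, $k<K$, and let $a_1,\dots,a_k$ be a partition of $\{1,\dots,K\}$ into disjoint nonempty subsets. Define the (deterministic-scan) Gibbs kernel $$M(u,du')=\Big(\prod_{j=1}^k\pi(u'_{a_j}\mid u'_{a_1:a_{j-1}},u_{a_{j+1}:a_k})\Big)\bigotimes_{i=1}^K\theta(du'_i),$$ where $\pi(u'_{a_j}\mid u'_{a_1:a_{j-1}},u_{a_{j+1}:a_k})=\pi(u'_{a_1:a_j},u_{a_{j+1}:a_k})\big/\int_{[-1,1]^{|a_j|}}\pi(u'_{a_1:a_j},u_{a_{j+1}:a_k})\bigotimes_{i\in a_j}\theta(du'_i)$. Then for all $u,\tilde u\in E$, $$M(\tilde u,du')\ge\exp\{-2\Phi^*(k-1)\}\,M(u,du').$$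
   Context: Notation $u_{a_1:a_{j-1}}$ denotes the coordinates of $u$ with indices in $a_1\cup\dots\cup a_{j-1}$, and $(u'_{a_1:a_j},u_{a_{j+1}:a_k})$ denotes the point of $E$ whose coordinates in $a_1\cup\cdots\cup a_j$ are taken from $u'$ and the remaining ones from $u$. *)

From HB Require Import structures.
From mathcomp Require Import all_boot all_order all_algebra.
From mathcomp Require Import all_classical all_reals all_analysis.
Set Implicit Arguments. Unset Strict Implicit. Unset Printing Implicit Defensive.
Import Order.TTheory GRing.Theory Num.Theory.
Import numFieldNormedType.Exports.
Local Open Scope classical_set_scope.
Local Open Scope ring_scope.

Fact ltN11 (R : realType) : (-1 : R) < 1.
Proof. by rewrite (@lt_trans _ _ 0) ?ltrN10 ?ltr01. Qed.

Definition theta (R : realType) := uniform_prob (ltN11 R).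

Definition cube (R : realType) (K : nat) : set (K.-tuple R) :=
  [set u | forall i : 'I_K, -1 <= tnth u i <= 1].

Definition upd (R : realType) (K : nat) (u : K.-tuple R) (i : 'I_K) (x : R)
  : K.-tuple R := [tuple if j == i then x else tnth u j | j < K].

(* Integration of f w.r.t. (x) _{i in s} theta(du_i), for s a list of
   (distinct) coordinates: the coordinates of u in s are integrated out
   (iterated integrals, which by Tonelli coincide with the integral against
   the product measure since all integrands used are nonnegative); the
   other coordinates are those of u. *)
Definition intco (R : realType) (K : nat) (s : seq 'I_K)
  (f : K.-tuple R -> \bar R) : K.-tuple R -> \bar R :=
  foldr (fun i g => fun u => (\int[@theta R]_x g (upd u i x))%E) f s.

(* Integral over the whole cube E w.r.t. (x)_{i=1}^K theta(du_i)
   (the base point is irrelevant: every coordinate is integrated out). *)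
Definition intE (R : realType) (K : nat) (f : K.-tuple R -> \bar R) : \bar R :=
  intco (enum 'I_K) f [tuple 0 | _ < K].

Definition pidens (R : realType) (K : nat) (Phi : K.-tuple R -> R)
  (u : K.-tuple R) : R :=
  expR (- Phi u) / fine (intE (fun v => (expR (- Phi v))%:E)).

(* (u'_{a_1:a_j}, u_{a_{j+1}:a_k}) : coordinates in a_1 u ... u a_j from u',
   the others from u. *)
Definition mixpt (R : realType) (K k : nat) (a : 'I_k -> {set 'I_K})
  (j : 'I_k) (u' u : K.-tuple R) : K.-tuple R :=
  [tuple if [exists l : 'I_k, (l <= j)%N && (i \in a l)] then tnth u' i
         else tnth u i | i < K].

Definition condens (R : realType) (K k : nat) (Phi : K.-tuple R -> R)
  (a : 'I_k -> {set 'I_K}) (j : 'I_k) (u' u : K.-tuple R) : R :=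
  pidens Phi (mixpt a j u' u) /
  fine (intco (enum (a j)) (fun w => (pidens Phi w)%:E) (mixpt a j u' u)).

Definition gibbs_dens (R : realType) (K k : nat) (Phi : K.-tuple R -> R)
  (a : 'I_k -> {set 'I_K}) (u u' : K.-tuple R) : R :=
  \prod_(j < k) condens Phi a j u' u.

Definition gibbs_kernel (R : realType) (K k : nat) (Phi : K.-tuple R -> R)
  (a : 'I_k -> {set 'I_K}) (u : K.-tuple R) (A : set (K.-tuple R)) : \bar R :=
  intE (fun u' => (gibbs_dens Phi a u u' * \1_A u')%:E).

Arguments cube R K : clear implicits.

From HB Require Import structures.
From mathcomp Require Import all_boot all_order all_algebra.
From mathcomp Require Import all_classical all_reals all_analysis measurable_realfun.
From mathcomp Require Import ring lra.
Set Implicit Arguments. Unset Strict Implicit. Unset Printing Implicit Defensive.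
Import Order.TTheory GRing.Theory Num.Theory.
Local Open Scope classical_set_scope.
Local Open Scope ring_scope.
Import HBNNSimple.

(* On the cube, e^{-Phi} takes values in [e^{-Phi*}, 1]; integrating out any
   block of coordinates against the probability measure theta preserves such
   bounds, so every full conditional density lies in [e^{-Phi*}, e^{Phi*}].
   Hence changing the starting point u multiplies each conditional factor by
   at least e^{-2 Phi*}.  The last factor (j = k) conditions only on the new
   point u' and does not depend on u at all, which gives k - 1 instead of k. *)

Section upper_integral.
Local Open Scope ereal_scope.

(* For nonnegative functions the integral is a supremum over simple functions
   below, so comparisons need no measurability. *)
Lemma le_ge0_integralT d (T : measurableType d) (R : realType)
    (mu : {measure set T -> \bar R}) (f g : T -> \bar R) :
  (forall x, 0 <= f x) -> (forall x, f x <= g x) ->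
  \int[mu]_x f x <= \int[mu]_x g x.
Proof.
move=> f0 fg.
have g0 x : 0 <= g x by apply: le_trans (f0 x) (fg x).
rewrite !ge0_integralTE //; apply: ereal_sup_le => _ [h hf <-].
by exists h => //= x; apply: le_trans (hf x) (fg x).
Qed.

Lemma uniform_integral_scale_le (R : realType) (a b : R) (ab : (a < b)%R)
    (f g : R -> \bar R) (c : R) : (0 <= c)%R ->
  (forall x, 0 <= f x) -> (forall x, 0 <= g x) ->
  (forall x, (a <= x <= b)%R -> c%:E * f x <= g x) ->
  c%:E * \int[uniform_prob ab]_x f x <= \int[uniform_prob ab]_x g x.
Proof.
move=> c0 f0 g0 fg.
have [->|c_neq0] := eqVneq c 0%R; first by rewrite mul0e integral_ge0.
have c_gt0 : (0 < c)%R by rewrite lt0r c_neq0.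
rewrite -lee_pdivlMl // ge0_integralTE //; apply: ge_ereal_sup => _ [h hf <-].
rewrite lee_pdivlMl // -integralT_nnsfun -ge0_integralZl_EFin //; first last.
- exact/measurable_EFinP.
- by move=> x _; rewrite lee_fin.
under eq_integral do rewrite -EFinM.
pose hab x := (c * h x * \1_`[a, b] x)%R.
have hab0 x : (0 <= hab x)%R by rewrite !mulr_ge0 // indicE ler0n.
have mhab : measurable_fun setT (EFin \o hab).
  by apply/measurable_EFinP; repeat apply: measurable_funM.
have -> : \int[uniform_prob ab]_x (c * h x)%:E =
    \int[uniform_prob ab]_x (hab x)%:E.
  rewrite !integral_uniform //.
  - congr (_ * _); apply: eq_integral => x.
    by rewrite inE => xab; rewrite /hab indicE mem_set // mulr1.
  - by apply/measurable_EFinP; apply: measurable_funM.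
  - by move=> x; rewrite lee_fin mulr_ge0.
apply: le_ge0_integralT => x; first by rewrite lee_fin.
rewrite /hab indicE; case: (boolP (x \in _)) => xab; last by rewrite mulr0.
rewrite mulr1 EFinM; apply: le_trans (fg x _); last by move: xab; rewrite inE /= in_itv.
by rewrite lee_pmul2l // lte_fin.
Qed.

End upper_integral.

Lemma ratio_bounds (R : realType) (A B p q : R) : 0 < A ->
  A <= p <= B -> A <= q <= B -> A / B <= p / q <= B / A.
Proof.
move=> A0 /andP[Ap pB] /andP[Aq qB].
have B0 : 0 < B by apply: lt_le_trans A0 (le_trans Ap pB).
have q0 : 0 < q by apply: lt_le_trans A0 Aq.
apply/andP; split.
  by rewrite ler_pdivrMr // mulrAC ler_pdivlMr //; nra.
by rewrite ler_pdivrMr // mulrAC ler_pdivlMr //; nra.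
Qed.

Section cube_integrals.
Variables (R : realType) (K : nat).
Local Open Scope ereal_scope.

Lemma cube_upd (v : K.-tuple R) i x :
  cube R K v -> (-1 <= x <= 1)%R -> cube R K (upd v i x).
Proof. by move=> cv x11 j; rewrite tnth_mktuple; case: (j == i). Qed.

Lemma cube_mixpt k (a : 'I_k -> {set 'I_K}) j (u' u : K.-tuple R) :
  cube R K u' -> cube R K u -> cube R K (mixpt a j u' u).
Proof. by move=> cu' cu i; rewrite tnth_mktuple; case: ifP. Qed.

Lemma cube_tuple0 : cube R K [tuple 0%R | _ < K].
Proof. by move=> i; rewrite tnth_mktuple lerN10 ler01. Qed.

Lemma intco_ge0 (s : seq 'I_K) (f : K.-tuple R -> \bar R) :
  (forall v, 0 <= f v) -> forall v, 0 <= intco s f v.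
Proof.
move=> f0; elim: s => [|i s IH] v /=; first exact: f0.
by apply: integral_ge0 => x _; apply: IH.
Qed.

Lemma intco_scale_le (s : seq 'I_K) (f g : K.-tuple R -> \bar R) (c : R) :
  (0 <= c)%R -> (forall v, 0 <= f v) -> (forall v, 0 <= g v) ->
  (forall v, cube R K v -> c%:E * f v <= g v) ->
  forall v, cube R K v -> c%:E * intco s f v <= intco s g v.
Proof.
move=> c0 f0 g0 fg; elim: s => [|i s IH] v cv /=; first exact: fg.
apply: uniform_integral_scale_le => // [x|x|x x11].
- exact: intco_ge0.
- exact: intco_ge0.
- by apply: IH; apply: cube_upd.
Qed.

Lemma intco_cst (s : seq 'I_K) (r : R) v : intco s (fun=> r%:E) v = r%:E.
Proof.
elim: s v => [|i s IH] v //=.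
under eq_integral do rewrite IH.
by rewrite integral_cst //= probability_setT mule1.
Qed.

Lemma intco_bounds (s : seq 'I_K) (f : K.-tuple R -> R) (lo hi : R) :
  (0 <= lo)%R -> (forall v, 0 <= f v)%R ->
  (forall v, cube R K v -> lo <= f v <= hi)%R ->
  forall v, cube R K v -> (lo <= fine (intco s (fun w => (f w)%:E) v) <= hi)%R.
Proof.
move=> lo0 f0 fb v cv.
have hi_ge0 : (0 <= hi)%R by case/andP: (fb v cv) => lof fhi; lra.
have fE0 w : 0 <= (f w)%:E by rewrite lee_fin.
have lo_le : lo%:E <= intco s (fun w => (f w)%:E) v.
  rewrite -[lo%:E]mule1 -(intco_cst s 1 v).
  apply: (@intco_scale_le s _ _ lo lo0 (fun=> lee01) fE0) => // w cw.
  by rewrite mule1 lee_fin; case/andP: (fb w cw).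
have le_hi : intco s (fun w => (f w)%:E) v <= hi%:E.
  rewrite -[intco _ _ v]mul1e -(intco_cst s hi v).
  have hiE0 : forall w : K.-tuple R, 0 <= hi%:E by move=> _; rewrite lee_fin.
  apply: (@intco_scale_le s _ _ 1 ler01 fE0 hiE0) => // w cw.
  by rewrite mul1e lee_fin; case/andP: (fb w cw).
have fin : intco s (fun w => (f w)%:E) v \is a fin_num.
  by rewrite ge0_fin_numE ?(le_lt_trans le_hi) ?ltry // (le_trans _ lo_le).
by rewrite -!lee_fin fineK // lo_le le_hi.
Qed.

End cube_integrals.

Lemma mixpt_last (R : realType) (K k : nat) (a : 'I_k.+1 -> {set 'I_K})
    (u' u : K.-tuple R) :
  (forall i, exists j, i \in a j) -> mixpt a ord_max u' u = u'.
Proof.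
move=> cov; apply: eq_from_tnth => i; rewrite tnth_mktuple.
have [l ail] := cov i; case: ifP => // /negbT/existsPn/(_ l).
by rewrite ail andbT -ltnS ltn_ord.
Qed.

Section gibbs_density_bounds.
Variables (R : realType) (K : nat) (Phi : K.-tuple R -> R) (Phistar : R).
Hypothesis Phi_bounded : forall u, cube R K u -> 0 <= Phi u <= Phistar.

Let Z := fine (intE (fun v => (expR (- Phi v))%:E)).

Lemma normalizer_bounds : expR (- Phistar) <= Z <= 1.
Proof.
apply: intco_bounds => [|v|v cv|]; rewrite ?expR_ge0 //; last exact: cube_tuple0.
case/andP: (Phi_bounded cv) => Phi_ge0 Phi_le.
by rewrite ler_expR lerN2 Phi_le -expR0 ler_expR oppr_le0 Phi_ge0.
Qed.

Let Z_gt0 : 0 < Z.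
Proof. by case/andP: normalizer_bounds => + _; apply: lt_le_trans; rewrite expR_gt0. Qed.

Lemma pidens_ge0 v : 0 <= pidens Phi v.
Proof. by rewrite divr_ge0 ?expR_ge0 // ltW. Qed.

Lemma pidens_bounds v :
  cube R K v -> expR (- Phistar) / Z <= pidens Phi v <= 1 / Z.
Proof.
move=> cv; rewrite /pidens -/Z !ler_pM2r ?invr_gt0 //.
case/andP: (Phi_bounded cv) => Phi_ge0 Phi_le.
by rewrite ler_expR lerN2 Phi_le -expR0 ler_expR oppr_le0 Phi_ge0.
Qed.

Lemma condens_ge0 k (a : 'I_k -> {set 'I_K}) j u' u : 0 <= condens Phi a j u' u.
Proof.
rewrite divr_ge0 ?pidens_ge0 // fine_ge0 //.
by apply: intco_ge0 => w; rewrite lee_fin pidens_ge0.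
Qed.

Lemma condens_bounds k (a : 'I_k -> {set 'I_K}) j u' u :
  cube R K u' -> cube R K u ->
  expR (- Phistar) <= condens Phi a j u' u <= expR Phistar.
Proof.
move=> cu' cu; have cm := cube_mixpt a j cu' cu.
have lo_gt0 : 0 < expR (- Phistar) / Z by rewrite divr_gt0 ?expR_gt0.
have den_bounds := intco_bounds (enum (a j)) (ltW lo_gt0) pidens_ge0 pidens_bounds cm.
have := ratio_bounds lo_gt0 (pidens_bounds cm) den_bounds.
have -> : expR (- Phistar) / Z / (1 / Z) = expR (- Phistar).
  by field; rewrite gt_eqF.
have -> : 1 / Z / (expR (- Phistar) / Z) = expR Phistar.
  by rewrite expRN; field; rewrite !gt_eqF ?expR_gt0.
by [].
Qed.

Lemma condens_change_start k (a : 'I_k -> {set 'I_K}) j u' u ut :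
  cube R K u' -> cube R K u -> cube R K ut ->
  expR (- (2 * Phistar)) * condens Phi a j u' u <= condens Phi a j u' ut.
Proof.
move=> cu' cu cut; case/andP: (condens_bounds a j cu' cut) => + _.
apply: le_trans; case/andP: (condens_bounds a j cu' cu) => _ le_exp.
rewrite (le_trans (ler_wpM2l (expR_ge0 _) le_exp)) // -expRD.
by rewrite ler_expR; lra.
Qed.

Lemma gibbs_dens_change_start k (a : 'I_k.+1 -> {set 'I_K}) u ut u' :
  (forall i, exists j, i \in a j) ->
  cube R K u -> cube R K ut -> cube R K u' ->
  expR (- (2 * Phistar * (k.+1%:R - 1))) * gibbs_dens Phi a u u'
    <= gibbs_dens Phi a ut u'.
Proof.
move=> cov cu cut cu'; rewrite /gibbs_dens !big_ord_recr /=.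
have -> : condens Phi a ord_max u' ut = condens Phi a ord_max u' u.
  by rewrite /condens !mixpt_last.
have -> : expR (- (2 * Phistar * (k.+1%:R - 1))) =
    \prod_(i < k) expR (- (2 * Phistar)).
  rewrite prodr_const card_ord -expRM_natl -natr1; congr expR; ring.
rewrite mulrA ler_wpM2r ?condens_ge0 // -big_split /=.
apply: ler_prod => i _; rewrite mulr_ge0 ?expR_ge0 ?condens_ge0 //=.
exact: condens_change_start.
Qed.

End gibbs_density_bounds.

Theorem proposition4p3 (R : realType) (K : nat) (hK : (2 <= K)%N)
  (Phi : K.-tuple R -> R) (Phistar : R)
  (hPhimeas : measurable_fun (cube R K) Phi)
  (hPhibd : forall u, cube R K u -> 0 <= Phi u <= Phistar)
  (k : nat) (hk : (k < K)%N) (a : 'I_k -> {set 'I_K})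
  (ha_ne : forall j, (0 < #|a j|)%N)
  (ha_disj : forall (j l : 'I_k) (i : 'I_K), i \in a j -> i \in a l -> j = l)
  (ha_cov : forall i : 'I_K, exists j, i \in a j) :
  forall u ut : K.-tuple R, cube R K u -> cube R K ut ->
  forall A : set (K.-tuple R), measurable A ->
    ((expR (- (2 * Phistar * (k%:R - 1))))%:E * gibbs_kernel Phi a u A
       <= gibbs_kernel Phi a ut A)%E.
Proof.
move=> u ut cu cut A _.
case: k a {hk ha_ne ha_disj} ha_cov => [|k] a cov.
  by have [[]] := cov (Ordinal (leq_trans (ltn0Sn 1) hK)).
have integrand_ge0 w v : 0 <= gibbs_dens Phi a w v * \1_A v.
  apply: mulr_ge0; last by rewrite indicE ler0n.
  rewrite /gibbs_dens; apply: prodr_ge0 => j _; exact: (condens_ge0 hPhibd).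
apply: intco_scale_le => [|v|v|v cv|]; last exact: cube_tuple0.
- exact: expR_ge0.
- by rewrite lee_fin integrand_ge0.
- by rewrite lee_fin integrand_ge0.
rewrite -EFinM lee_fin mulrA ler_wpM2r ?indicE ?ler0n //.
exact: (gibbs_dens_change_start hPhibd).
Qed.
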